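(* Let $n,m,k\ge1$, $C:\{0,1\}^n\to\{0,1\}^m$, $V:\{0,1\}^m\times\{0,1\}^\ell\to\{0,1\}$, $\varepsilon\in(0,1/25]$, $\alpha>1$, $p_H,p_{UH}\in[0,1]$ with $p_H\in[g_H\pm\frac45\sqrt\varepsilon]$ and $p_{UH}\in[g_{UH}\pm10\sqrt\varepsilon]$. Let $y_1,\dots,y_k\in\{0,1\}^m$ be arbitrary, let $u:[k]\to\mathbb{Z}_{\ge0}\cup\{\infty\}$, $\mathcal{Y}\subseteq[k]$ and $w_i\in\{0,1\}^\ell$ ($i\in\mathcal{Y}$), and let $\mathcal{L}=\{i\in[k]:2^{-(u(i)+1)\varepsilon}<\alpha2^{-m}\}$, $\mathcal{H}=[k]\setminus\mathcal{L}$. Assume: (a) $|\mathcal{Y}|/k\in[g_{UY}\pm\varepsilon]$; (b) $V(y_i,w_i)=1$ for all $i\in\mathcal{Y}$; (c) $|\mathcal{H}|/k\in[p_{UH}\pm3\sqrt\varepsilon]$; (d) $\frac1k\sum_{i\in\mathcal{L}}2^m2^{-u(i)\varepsilon}\in[1-p_H\pm5\sqrt\varepsilon]$; (1) $\Pr_{y\leftarrow\mathcal{D}^C}[\mathcal{D}^C(y)\in(1\pm4\varepsilon)\alpha2^{-m}]\le\sqrt\varepsilon$; (2) for all $i$: $u'(i)=\infty\Rightarrow u(i)=\infty$; (3) for all $i$: $u(i)=\infty$ or $\mathcal{D}^C(y_i)>(1-\varepsilon/2)2^{-(u(i)+1)\varepsilon}$; (4) $\frac1k|\{i:y_i\in\mathcal{M}\}|<3\sqrt\varepsilon/\alpha$;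 (5) $|\mathcal{Y}'|/k\in[g_{UY}\pm\varepsilon]$; (6) $|\mathcal{H}'|/k\in[g_{UH}\pm3\sqrt\varepsilon]$; (7) $\frac1k\sum_{i\in\mathcal{L}'}2^m2^{-u'(i)\varepsilon}\in[1-g_H\pm5\sqrt\varepsilon]$. Then: (i) $u(i)\ge u'(i)-1$ for all $i\in[k]$; (ii) $|\mathcal{L}'\setminus\mathcal{L}|\le3k\sqrt\varepsilon$; (iii) $|\mathcal{L}\setminus\mathcal{L}'|\le19k\sqrt\varepsilon$; (iv) $\frac1k\sum_{i\in\mathcal{L}'\setminus\mathcal{L}}2^m2^{-u'(i)\varepsilon}\le6\sqrt\varepsilon\alpha$ and $\frac1k\sum_{i\in\mathcal{L}\setminus\mathcal{L}'}2^m2^{-u(i)\varepsilon}\le38\sqrt\varepsilon\alpha$; (v) $\frac1k\sum_{i\in\mathcal{L}\cap\mathcal{L}'}2^m2^{-u(i)\varepsilon}\in[1-g_H\pm44\sqrt\varepsilon\alpha]$ and $\frac1k\sum_{i\in\mathcal{L}\cap\mathcal{L}'}2^m2^{-u'(i)\varepsilon}\in[1-g_H\pm11\sqrt\varepsilon\alpha]$; (vi) $\mathrm{Gain}_{\mathcal{L}\cap\mathcal{L}'}(u',u)\le4\varepsilon$ and $\mathrm{Loss}_{\mathcal{L}\cap\mathcal{L}'}(u',u)\le59\sqrt\varepsilon\alpha$.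
   Context: $\mathcal{D}^C(y)=\Pr_{r\leftarrow\{0,1\}^n}[C(r)=y]$ for uniform $r$. For $y\in\{0,1\}^m$ write $y\in V$ if there is $w$ with $V(y,w)=1$. Let $t=\lceil n/\varepsilon\rceil$, $\mathcal{B}_j=\{y:\mathcal{D}^C(y)\in(2^{-(j+1)\varepsilon},2^{-j\varepsilon}]\}$ for $j\in\{0,\dots,t\}$, and $u'(y)=j$ if $y\in\mathcal{B}_j$, $u'(y)=\infty$ otherwise; conventions $2^{-\infty\varepsilon}=0$, $j<\infty$, $\infty+j=\infty$. $g_H=\Pr_{y\leftarrow\mathcal{D}^C}[\mathcal{D}^C(y)\ge\alpha2^{-m}]$, $g_{UH}=\Pr_{y\text{ uniform}}[\mathcal{D}^C(y)\ge\alpha2^{-m}]$, $g_{UY}=\Pr_{y\text{ uniform}}[y\in V]$, $g_{YL}=\Pr_{y\leftarrow\mathcal{D}^C}[\mathcal{D}^C(y)<\alpha2^{-m}\wedge y\in V]$. For the given $y_1,\dots,y_k$: $u'(i):=u'(y_i)$, $\mathcal{Y}'=\{i:y_i\in V\}$, $\mathcal{L}'=\{i:2^{-(u'(i)+1)\varepsilon}<\alpha2^{-m}\}$, $\mathcal{H}'=[k]\setminus\mathcal{L}'$, $\mathcal{M}=\{y:\mathcal{D}^C(y)\in(1\pm4\varepsilon)\alpha2^{-m}\}$. For labelings $u',u$ of $[k]$ and $\mathcal{A}\subseteq[k]$: $\mathrm{Loss}_{\mathcal{A}}(u',u)=\frac1k\sum_{i\in\mathcal{A}:u'(i)<u(i)}2^m(2^{-u'(i)\varepsilon}-2^{-u(i)\varepsilon})$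 and $\mathrm{Gain}_{\mathcal{A}}(u',u)=\frac1k\sum_{i\in\mathcal{A}:u'(i)>u(i)}2^m(2^{-u(i)\varepsilon}-2^{-u'(i)\varepsilon})$. $[a\pm b]=[a-b,a+b]$, $(1\pm\delta)x=[(1-\delta)x,(1+\delta)x]$. *)

From HB Require Import structures.
From Stdlib Require Import Reals.
From mathcomp Require Import all_boot.

Set Implicit Arguments.
Unset Strict Implicit.
Unset Printing Implicit Defensive.

HB.instance Definition _ := Monoid.isComLaw.Build R R0 Rplus (fun a b c => esym (Rplus_assoc a b c)) Rplus_comm Rplus_0_l.

Local Open Scope R_scope.

Definition Rleb (x y : R) : bool := if Rle_dec x y then true else false.
Definition Rltb (x y : R) : bool := if Rlt_dec x y then true else false.

Definition in_pm (x a b : R) : Prop := a - b <= x <= a + b.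

(* Extended naturals Z_{>=0} u {oo}: None = oo. *)
Definition enat := option nat.
Definition eadd (u : enat) (j : nat) : enat := option_map (fun a => (a + j)%nat) u.
Definition ele (u v : enat) : bool :=
  match u, v with
  | _, None => true
  | None, Some _ => false
  | Some a, Some b => (a <= b)%N
  end.
Definition elt (u v : enat) : bool :=
  match u, v with
  | Some a, None => true
  | Some a, Some b => (a < b)%N
  | _, _ => false
  end.

(* 2^{-u eps}, with 2^{-oo eps} = 0 *)
Definition pw (eps : R) (u : enat) : R :=
  match u with Some j => Rpower 2 (- (INR j * eps)) | None => 0 end.

(* ceiling of a real: 1 - up(-x) is the least integer >= x *)
Definition ceilR (x : R) : Z := (1 - up (- x))%Z.

Definition bits (n : nat) := n.-tuple bool.

Definition DC (n m : nat) (C : bits n -> bits m) (y : bits m) : R :=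
  INR #|[set r | C r == y]| / 2 ^ n.

Definition inV (m l : nat) (V : bits m -> bits l -> bool) (y : bits m) : bool :=
  [exists w, V y w].

Definition PrD (n m : nat) (C : bits n -> bits m) (P : pred (bits m)) : R :=
  \big[Rplus/R0]_(y : bits m | P y) DC C y.
Definition PrU (m : nat) (P : pred (bits m)) : R :=
  INR #|[set y | P y]| / 2 ^ m.

Definition tpar (n : nat) (eps : R) : nat := Z.to_nat (ceilR (INR n / eps)).

Definition inB (n m : nat) (C : bits n -> bits m) (eps : R) (j : nat) (y : bits m) : bool :=
  Rltb (Rpower 2 (- (INR (j + 1) * eps))) (DC C y) && Rleb (DC C y) (Rpower 2 (- (INR j * eps))).

(* u'(y) = j if y \in B_j for j in {0..t}, oo otherwise
   (the B_j are pairwise disjoint, so the first such j is the only one) *)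
Definition uprime (n m : nat) (C : bits n -> bits m) (eps : R) (y : bits m) : enat :=
  let t := tpar n eps in
  let j := find (fun j => inB C eps j y) (iota 0 t.+1) in
  if (j <= t)%N then Some j else None.

Definition gH (n m : nat) (C : bits n -> bits m) (alpha : R) : R :=
  PrD C (fun y => Rleb (alpha / 2 ^ m) (DC C y)).
Definition gUH (n m : nat) (C : bits n -> bits m) (alpha : R) : R :=
  PrU (fun y : bits m => Rleb (alpha / 2 ^ m) (DC C y)).
Definition gUY (m l : nat) (V : bits m -> bits l -> bool) : R :=
  PrU (fun y : bits m => inV V y).
Definition gYL (n m l : nat) (C : bits n -> bits m) (V : bits m -> bits l -> bool) (alpha : R) : R :=
  PrD C (fun y => Rltb (DC C y) (alpha / 2 ^ m) && inV V y).

Definition Lset (k m : nat) (eps alpha : R) (u : 'I_k -> enat) : {set 'I_k} :=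
  [set i | Rltb (pw eps (eadd (u i) 1)) (alpha / 2 ^ m)].

Definition inM (n m : nat) (C : bits n -> bits m) (eps alpha : R) (y : bits m) : bool :=
  Rleb ((1 - 4 * eps) * (alpha / 2 ^ m)) (DC C y) &&
  Rleb (DC C y) ((1 + 4 * eps) * (alpha / 2 ^ m)).

Definition massS (k m : nat) (eps : R) (A : {set 'I_k}) (u : 'I_k -> enat) : R :=
  / INR k * \big[Rplus/R0]_(i in A) (2 ^ m * pw eps (u i)).

Definition Loss (k m : nat) (eps : R) (A : {set 'I_k}) (u' u : 'I_k -> enat) : R :=
  / INR k * \big[Rplus/R0]_(i in A | elt (u' i) (u i))
              (2 ^ m * (pw eps (u' i) - pw eps (u i))).
Definition Gain (k m : nat) (eps : R) (A : {set 'I_k}) (u' u : 'I_k -> enat) : R :=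
  / INR k * \big[Rplus/R0]_(i in A | elt (u i) (u' i))
              (2 ^ m * (pw eps (u i) - pw eps (u' i))).

From HB Require Import structures.
From Stdlib Require Import Reals Lra Psatz.
From mathcomp Require Import all_boot.
Local Open Scope R_scope.
Set Implicit Arguments.
Unset Strict Implicit.

(* Everything rests on the decay factor q = 2^{-eps} of one bucket, which for
   eps <= 1/25 satisfies 1/(1 + 2 eps) <= q < 1 - eps/2.  Consequently:
   - hypotheses (2) and (3) pin u'(i) to at most u(i) + 1 (claim (i)), since a
     drop of two buckets would lower D^C(y_i) below (1 - eps/2) 2^{-(u(i)+1)eps};
   - an index that is in L' but not in L has D^C(y_i) within a factor
     (1 +- 4 eps) of the threshold alpha 2^{-m}, i.e. y_i lies in M, so (4)
     bounds |L' \ L| (claim (ii)); the cardinality identity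
     |L \ L'| = |L' \ L| + |H'| - |H| and (c), (6) then bound |L \ L'| (iii);
   - every index of a set L(v) carries mass 2^m 2^{-v(i) eps} <= 2 alpha,
     so the masses of L' \ L and L \ L' are at most 2 alpha times their
     cardinalities (iv), and splitting the masses (d), (7) over L, L' gives (v);
   - a gain only occurs when u' = u + 1, where it is at most 2 eps times the
     u'-mass, and Loss - Gain is the difference of the two masses (vi). *)

Lemma RltbP (x y : R) : reflect (x < y) (Rltb x y).
Proof. by rewrite /Rltb; case: Rlt_dec => h; constructor. Qed.

Lemma RlebP (x y : R) : reflect (x <= y) (Rleb x y).
Proof. by rewrite /Rleb; case: Rle_dec => h; constructor. Qed.

Section RealSums.
Variable I : finType.

Lemma sumR_le (P : pred I) (F G : I -> R) :
  (forall i, P i -> F i <= G i) ->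
  \big[Rplus/R0]_(i | P i) F i <= \big[Rplus/R0]_(i | P i) G i.
Proof. by move=> FG; apply: (big_ind2 Rle) => //; [lra | move=> *; lra]. Qed.

Lemma sumR_ge0 (P : pred I) (F : I -> R) :
  (forall i, P i -> 0 <= F i) -> 0 <= \big[Rplus/R0]_(i | P i) F i.
Proof. by move=> F0; apply: (big_ind (fun x => 0 <= x)) => //; [lra | move=> *; lra]. Qed.

Lemma sumR_const (A : {set I}) (c : R) :
  \big[Rplus/R0]_(i in A) c = INR #|A| * c.
Proof.
rewrite big_const; elim: #|A| => [|j IH]; first by rewrite /=; ring.
by rewrite iterS IH S_INR; ring.
Qed.

Lemma sumR_scale (P : pred I) (F : I -> R) (c : R) :
  \big[Rplus/R0]_(i | P i) (c * F i) = c * \big[Rplus/R0]_(i | P i) F i.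
Proof. by apply: (big_rec2 (fun a b => a = c * b)) => [|i a b _ ->]; ring. Qed.

End RealSums.

(* |A \ B| - |B \ A| = |~B| - |~A|: both sides equal |A| - |B|. *)
Lemma card_setD_swap (T : finType) (A B : {set T}) :
  INR #|A :\: B| = INR #|B :\: A| + INR #|~: B| - INR #|~: A|.
Proof.
have := f_equal INR (cardsID B A); have := f_equal INR (cardsID A B).
have := f_equal INR (cardsC A); have := f_equal INR (cardsC B).
rewrite !plus_INR [B :&: A]setIC; lra.
Qed.

(* The normalization 1/k is nonnegative (with 1/0 = 0). *)
Lemma Rinv_INR_ge0 (k : nat) : 0 <= / INR k.
Proof.
case: k => [|k]; first by rewrite Rinv_0; lra.
by left; apply/Rinv_0_lt_compat/lt_0_INR/ltP.
Qed.

Lemma in_pm_scale (a K c d : R) :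
  0 < K -> in_pm (a / K) c d -> K * (c - d) <= a <= K * (c + d).
Proof.
move=> K0 [lo hi]; have -> : a = K * (a / K) by field; lra.
by split; apply: Rmult_le_compat_l; lra.
Qed.

Lemma sqrt_eps_bounds (eps : R) :
  0 < eps <= 1 / 25 -> 0 < sqrt eps /\ sqrt eps <= 1 / 5 /\ eps <= sqrt eps.
Proof.
move=> heps; have s0 : 0 < sqrt eps by apply: sqrt_lt_R0; lra.
have ss : sqrt eps * sqrt eps = eps by apply: sqrt_sqrt; lra.
split=> //; split; nra.
Qed.

(* 3/5 < ln 2 < 1: the first because exp(3/5)^5 = exp 1 ^ 3 <= 27 < 2^5. *)
Lemma ln2_bounds : 3 / 5 < ln 2 < 1.
Proof.
split; last first.
  rewrite -(ln_exp 1); apply: ln_increasing; first lra.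
  by have := exp_ineq1 1; lra.
have e35 : exp (3 / 5) ^ 5 = exp 1 ^ 3.
  by rewrite /= !Rmult_1_r -!exp_plus; f_equal; field.
have e27 : exp 1 ^ 3 <= 27.
  have := exp_le_3; have := exp_pos 1; rewrite /=; nra.
have lt2 : exp (3 / 5) < 2.
  apply: Rnot_le_lt => h2; have := pow_incr 2 (exp (3 / 5)) 5 ltac:(lra).
  rewrite e35 /=; lra.
by rewrite -(ln_exp (3 / 5)); apply: ln_increasing => //; apply: exp_pos.
Qed.

Lemma pw_ge0 (eps : R) (v : enat) : 0 <= pw eps v.
Proof. by case: v => [j|] /=; [left; apply: exp_pos | lra]. Qed.

Lemma pw_eadd (eps : R) (v : enat) :
  pw eps (eadd v 1) = pw eps v * Rpower 2 (- eps).
Proof.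
case: v => [j|] /=; last ring.
by rewrite -Rpower_plus plus_INR /=; f_equal; ring.
Qed.

Lemma pw_antitone (eps : R) (j j' : nat) :
  0 <= eps -> (j <= j')%N -> pw eps (Some j') <= pw eps (Some j).
Proof.
move=> he /leP hj /=; apply: Rle_Rpower; first lra.
by have := le_INR _ _ hj; nra.
Qed.

Section OneBucket.
Variable eps : R.
Hypothesis heps : 0 < eps <= 1 / 25.

Local Notation q := (Rpower 2 (- eps)).

Lemma decay_pos : 0 < q.
Proof. exact: exp_pos. Qed.

(* q = exp(-x) with x = eps ln 2, and exp(-x) < 1/(1 + x) <= 1 - eps/2. *)
Lemma decay_lt : q < 1 - eps / 2.
Proof.
have [l1 l2] := ln2_bounds; rewrite /Rpower.
have -> : - eps * ln 2 = - (eps * ln 2) by ring.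
set x := eps * ln 2; have x0 : 0 < x by rewrite /x; nra.
have E : exp (- x) * exp x = 1 by rewrite -exp_plus Rplus_opp_l exp_0.
have := exp_ineq1 x ltac:(lra); have := exp_pos (- x).
have : 1 <= (1 + x) * (1 - eps / 2) by rewrite /x; nra.
nra.
Qed.

(* exp(-x) >= 1 - x and (1 - x)(1 + 2 eps) >= 1 since ln 2 < 1. *)
Lemma decay_ge : 1 <= q * (1 + 2 * eps).
Proof.
have [l1 l2] := ln2_bounds; rewrite /Rpower.
have -> : - eps * ln 2 = - (eps * ln 2) by ring.
set x := eps * ln 2.
have := exp_ineq1_le (- x); have : 1 <= (1 - x) * (1 + 2 * eps) by rewrite /x; nra.
nra.
Qed.

Lemma bucket_drop_le1 (D : R) (a b : nat) :
  D <= pw eps (Some b) -> (1 - eps / 2) * pw eps (Some (a + 1)%N) < D ->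
  (b <= a + 1)%N.
Proof.
move=> Db Da; rewrite leqNgt; apply/negP => ab.
have := @pw_antitone eps (a + 1 + 1)%N b (Rlt_le _ _ (proj1 heps)) ltac:(by rewrite addn1).
rewrite (pw_eadd _ (Some (a + 1)%N)).
have : 0 < pw eps (Some (a + 1)%N) by apply: exp_pos.
have := decay_lt; nra.
Qed.

Lemma light_weight (v : enat) (T : R) : pw eps (eadd v 1) < T -> pw eps v <= 2 * T.
Proof.
rewrite pw_eadd => hv; have := pw_ge0 eps v; have := decay_ge; nra.
Qed.

Lemma bucket_gap (a : nat) :
  pw eps (Some a) - pw eps (Some (a + 1)%N) <= 2 * eps * pw eps (Some (a + 1)%N).
Proof.
rewrite (pw_eadd _ (Some a)); have := pw_ge0 eps (Some a); have := decay_ge; nra.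
Qed.

Lemma near_threshold (D T : R) (a b : enat) :
  0 < T -> T <= pw eps (eadd a 1) -> pw eps (eadd b 1) < T ->
  D <= pw eps b -> (1 - eps / 2) * pw eps (eadd a 1) < D ->
  (1 - 4 * eps) * T <= D <= (1 + 4 * eps) * T.
Proof.
move=> T0 Ta Tb Db Da; rewrite pw_eadd in Tb.
have := pw_ge0 eps b; have := decay_ge; have := decay_pos.
split; nra.
Qed.

End OneBucket.

Lemma uprime_le (n m : nat) (C : bits n -> bits m) (eps : R) (z : bits m) (j : nat) :
  uprime C eps z = Some j -> DC C z <= pw eps (Some j).
Proof.
rewrite /uprime; set t := tpar n eps; set p := fun j0 => inB C eps j0 z.
case: ifP => // hj [<-].
have hs : has p (iota 0 t.+1) by rewrite has_find size_iota ltnS.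
have := nth_find 0%N hs; rewrite nth_iota ?ltnS // add0n.
by case/andP=> _ /RlebP.
Qed.

Lemma gH_ge0 (n m : nat) (C : bits n -> bits m) (alpha : R) : 0 <= gH C alpha.
Proof.
apply: sumR_ge0 => z _; apply: Rmult_le_pos; first exact: pos_INR.
by left; apply/Rinv_0_lt_compat/pow_lt; lra.
Qed.

Section Masses.
Variables (k m : nat) (eps : R).
Implicit Types (A B : {set 'I_k}) (u v : 'I_k -> enat).

Lemma massS_split A B v : massS m eps A v = massS m eps (A :&: B) v + massS m eps (A :\: B) v.
Proof. by rewrite /massS (big_setID B) /= Rmult_plus_distr_l. Qed.

Lemma massS_ge0 A v : 0 <= massS m eps A v.
Proof.
apply: Rmult_le_pos; first exact: Rinv_INR_ge0.
apply: sumR_ge0 => i _; apply: Rmult_le_pos; [apply: pow_le; lra | exact: pw_ge0].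
Qed.

Lemma massS_le_card A v c :
  (forall i, i \in A -> 2 ^ m * pw eps (v i) <= c) -> massS m eps A v <= / INR k * INR #|A| * c.
Proof.
move=> Ac; rewrite Rmult_assoc -sumR_const.
by apply: Rmult_le_compat_l; [exact: Rinv_INR_ge0 | exact: sumR_le].
Qed.

Lemma loss_gain_balance A (u' : 'I_k -> enat) u :
  Loss m eps A u' u + massS m eps A u = massS m eps A u' + Gain m eps A u' u.
Proof.
rewrite /Loss /Gain /massS !big_mkcondr /= -!Rmult_plus_distr_l -!big_split /=.
congr (_ * _); apply: eq_bigr => i _.
case: (u i) => [a|]; case: (u' i) => [b|] /=; try ring.
by case: (ltngtP b a) => [_|_|->] /=; ring.
Qed.

Lemma Gain_le A (u' : 'I_k -> enat) u c : 0 <= c ->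
  (forall i, i \in A -> elt (u i) (u' i) -> pw eps (u i) - pw eps (u' i) <= c * pw eps (u' i)) ->
  Gain m eps A u' u <= c * massS m eps A u'.
Proof.
move=> c0 hgap; rewrite /Gain /massS big_mkcondr /=.
apply: (Rle_trans _ (/ INR k * \big[Rplus/R0]_(i in A) (c * (2 ^ m * pw eps (u' i))))).
  apply: Rmult_le_compat_l; first exact: Rinv_INR_ge0.
  apply: sumR_le => i iA; have P0 : 0 < 2 ^ m by apply: pow_lt; lra.
  have := pw_ge0 eps (u' i); case: ifP => [/(hgap i iA) g|_] p0.
  - by nra.
  - by apply: Rmult_le_pos => //; apply: Rmult_le_pos; lra.
by rewrite sumR_scale -!Rmult_assoc (Rmult_comm (/ INR k)); apply: Rle_refl.
Qed.

End Masses.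

Lemma massS_light (k m : nat) (eps alpha : R) (A : {set 'I_k}) (v : 'I_k -> enat) :
  0 < eps <= 1 / 25 -> A \subset Lset m eps alpha v ->
  massS m eps A v <= / INR k * INR #|A| * (2 * alpha).
Proof.
move=> heps /subsetP AL; apply: massS_le_card => i /AL; rewrite inE => /RltbP Li.
have P0 : 0 < 2 ^ m by apply: pow_lt; lra.
have := light_weight heps Li; set x := pw eps (v i) => hx.
have -> : 2 * alpha = 2 ^ m * (2 * (alpha / 2 ^ m)) by field; lra.
by apply: Rmult_le_compat_l; lra.
Qed.

Section LabelComparison.
Variables (n m k : nat) (C : bits n -> bits m) (eps alpha : R).
Variables (y : 'I_k -> bits m) (u : 'I_k -> enat).
Hypothesis heps : 0 < eps <= 1 / 25.
Hypothesis halpha : 1 < alpha.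
Hypothesis hk : (1 <= k)%N.
Hypothesis hu'u : forall i, uprime C eps (y i) = None -> u i = None.
Hypothesis hDu : forall i, u i = None \/ DC C (y i) > (1 - eps / 2) * pw eps (eadd (u i) 1).

Local Notation u' := (fun i : 'I_k => uprime C eps (y i)).
Local Notation L := (Lset m eps alpha u).
Local Notation L' := (Lset m eps alpha u').
Local Notation M := [set i | inM C eps alpha (y i)].
Local Notation K := (INR k).
Local Notation s := (sqrt eps).

Lemma K_pos : 0 < K.
Proof. exact/lt_0_INR/leP. Qed.

Lemma label_drop i a : u i = Some a -> exists2 b, u' i = Some b & (b <= a + 1)%N.
Proof.
move=> ua; case E: (uprime C eps (y i)) => [b|]; last by move: (hu'u E); rewrite ua.
exists b => //; apply: (bucket_drop_le1 heps (uprime_le E)).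
by case: (hDu i); rewrite ua.
Qed.

Lemma uprime_le_succ i : ele (u' i) (eadd (u i) 1).
Proof.
case ua: (u i) => [a|] /=; last by case: (uprime C eps (y i)).
by have [b -> /= ab] := label_drop ua.
Qed.

Lemma L'_minus_L_sub_M : L' :\: L \subset M.
Proof.
apply/subsetP => i; rewrite !inE => /andP[/RltbP nL /RltbP L'i].
have aP : 0 < alpha / 2 ^ m by apply: Rdiv_lt_0_compat; [lra | apply: pow_lt; lra].
have [Di|Di] := hDu i.
  by move: nL; rewrite Di /=; lra.
case E: (uprime C eps (y i)) L'i => [b|] L'i; last by move: nL; rewrite (hu'u E) /=; lra.
have [lo hi] := near_threshold heps aP (Rnot_lt_le _ _ nL) L'i (uprime_le E) Di.
by rewrite /inM; apply/andP; split; apply/RlebP.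
Qed.

Lemma card_L'_minus_L : / K * INR #|M| < 3 * s / alpha ->
  INR #|L' :\: L| <= 3 * K * s.
Proof.
move=> hM; have K0 := K_pos; have [s0 _] := sqrt_eps_bounds heps.
have ia : / alpha < 1 by rewrite -Rinv_1; apply: Rinv_lt_contravar; lra.
have M_le : INR #|M| < K * (3 * s / alpha).
  by rewrite -[INR #|M|](Rmult_1_l) -(Rinv_r K) ?Rmult_assoc; [apply: Rmult_lt_compat_l | lra].
have := Rle_lt_trans _ _ _ (le_INR _ _ (leP (subset_leq_card L'_minus_L_sub_M))) M_le.
have : 0 < K * s by apply: Rmult_lt_0_compat.
rewrite /Rdiv; nra.
Qed.

(* Claim (iii): |L \ L'| = |L' \ L| + |H'| - |H| with |H| ~ pUH ~ gUH ~ |H'|. *)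
Lemma card_L_minus_L' pUH :
  in_pm pUH (gUH C alpha) (10 * s) ->
  in_pm (INR #|~: L| / K) pUH (3 * s) ->
  in_pm (INR #|~: L'| / K) (gUH C alpha) (3 * s) ->
  INR #|L' :\: L| <= 3 * K * s ->
  INR #|L :\: L'| <= 19 * K * s.
Proof.
move=> [pUHlo _] hH hH' c2; have K0 := K_pos.
have [H_lo _] := in_pm_scale K0 hH; have [_ H'_hi] := in_pm_scale K0 hH'.
rewrite card_setD_swap; nra.
Qed.

Lemma mass_differences :
  INR #|L' :\: L| <= 3 * K * s -> INR #|L :\: L'| <= 19 * K * s ->
  massS m eps (L' :\: L) u' <= 6 * s * alpha /\ massS m eps (L :\: L') u <= 38 * s * alpha.
Proof.
move=> c2 c3; have K0 := K_pos.
have hK : forall x c, x <= c * K * s -> / K * x * (2 * alpha) <= 2 * c * s * alpha.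
  move=> x c xc; have -> : 2 * c * s * alpha = / K * (c * K * s) * (2 * alpha) by field; lra.
  by apply: Rmult_le_compat_r; [lra | apply: Rmult_le_compat_l; [exact: Rinv_INR_ge0 |]].
split.
- have -> : 6 * s * alpha = 2 * 3 * s * alpha by ring.
  by apply: Rle_trans (hK _ _ c2); apply: massS_light heps (subsetDl _ _).
- have -> : 38 * s * alpha = 2 * 19 * s * alpha by ring.
  by apply: Rle_trans (hK _ _ c3); apply: massS_light heps (subsetDl _ _).
Qed.

(* Claim (vi), gain part: a gain needs u' = u + 1, costing at most 2 eps of mass. *)
Lemma gain_small :
  Gain m eps (L :&: L') u' u <= 2 * eps * massS m eps (L :&: L') u'.
Proof.
apply: Gain_le => [|i _]; first lra.
case ua: (u i) => [a|] //; have [b -> ab] := label_drop ua.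
rewrite /= => ba; have -> : b = (a + 1)%N by apply/eqP; rewrite eqn_leq ab addn1.
exact: bucket_gap.
Qed.

End LabelComparison.

Theorem mainTheorem8
  (n m k l : nat) (hn : (1 <= n)%nat) (hm : (1 <= m)%nat) (hk : (1 <= k)%nat)
  (C : bits n -> bits m) (V : bits m -> bits l -> bool)
  (eps alpha pH pUH : R)
  (heps : 0 < eps <= 1 / 25) (halpha : 1 < alpha)
  (hpH01 : 0 <= pH <= 1) (hpUH01 : 0 <= pUH <= 1)
  (hpH : in_pm pH (gH C alpha) (4 / 5 * sqrt eps))
  (hpUH : in_pm pUH (gUH C alpha) (10 * sqrt eps))
  (y : 'I_k -> bits m) (u : 'I_k -> enat) (Y : {set 'I_k}) (w : 'I_k -> bits l) :
  let L := Lset m eps alpha u in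
  let H := ~: L in
  let u' := fun i : 'I_k => uprime C eps (y i) in
  let Y' := [set i | inV V (y i)] in
  let L' := Lset m eps alpha u' in
  let H' := ~: L' in
  (* (a) *) in_pm (INR #|Y| / INR k) (gUY V) eps ->
  (* (b) *) (forall i, i \in Y -> V (y i) (w i) = true) ->
  (* (c) *) in_pm (INR #|H| / INR k) pUH (3 * sqrt eps) ->
  (* (d) *) in_pm (massS m eps L u) (1 - pH) (5 * sqrt eps) ->
  (* (1) *) PrD C (inM C eps alpha) <= sqrt eps ->
  (* (2) *) (forall i, u' i = None -> u i = None) ->
  (* (3) *) (forall i, u i = None \/ DC C (y i) > (1 - eps / 2) * pw eps (eadd (u i) 1)) ->
  (* (4) *) / INR k * INR #|[set i | inM C eps alpha (y i)]| < 3 * sqrt eps / alpha ->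
  (* (5) *) in_pm (INR #|Y'| / INR k) (gUY V) eps ->
  (* (6) *) in_pm (INR #|H'| / INR k) (gUH C alpha) (3 * sqrt eps) ->
  (* (7) *) in_pm (massS m eps L' u') (1 - gH C alpha) (5 * sqrt eps) ->
  (* (i) *) (forall i, ele (u' i) (eadd (u i) 1)) /\
  (* (ii) *) INR #|L' :\: L| <= 3 * INR k * sqrt eps /\
  (* (iii) *) INR #|L :\: L'| <= 19 * INR k * sqrt eps /\
  (* (iv) *) (massS m eps (L' :\: L) u' <= 6 * sqrt eps * alpha /\
              massS m eps (L :\: L') u <= 38 * sqrt eps * alpha) /\
  (* (v) *) (in_pm (massS m eps (L :&: L') u) (1 - gH C alpha) (44 * sqrt eps * alpha) /\
             in_pm (massS m eps (L :&: L') u') (1 - gH C alpha) (11 * sqrt eps * alpha)) /\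
  (* (vi) *) (Gain m eps (L :&: L') u' u <= 4 * eps /\
              Loss m eps (L :&: L') u' u <= 59 * sqrt eps * alpha).
Proof.
move=> L H u' Y' L' H' _ _ hH hmass _ hu'u hDu hM _ hH' hmass'.
have [s0 [s5 es]] := sqrt_eps_bounds heps.
have c2 := card_L'_minus_L heps halpha hk hu'u hDu hM.
have c3 := card_L_minus_L' hk hpUH hH hH' c2.
have [m41 m42] := mass_differences heps halpha hk c2 c3.
have gain := gain_small alpha heps hu'u hDu.
rewrite -/u' -/L' -/L in c2 c3 m41 m42 gain.
have balance := loss_gain_balance m eps (L :&: L') u' u.
have split_u := massS_split m eps L L' u.
have split_u' := massS_split m eps L' L u'; rewrite setIC in split_u'.
have := massS_ge0 m eps (L :\: L') u; have := massS_ge0 m eps (L' :\: L) u'.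
have := massS_ge0 m eps (L :&: L') u'; have := gH_ge0 C alpha.
move: hpH hmass hmass'; rewrite /in_pm => hpH hmass hmass' gH0 m0 d0 d0'.
(* What remains is linear arithmetic on the mass decompositions, together
   with massS (L :&: L') u' <= massS L' u' <= 2 for the gain. *)
have sa : sqrt eps <= sqrt eps * alpha by nra.
do !split=> //; try nra.
exact: uprime_le_succ hu'u hDu.
Qed.
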